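(* Let $S^{\max}$, $L$ and $\alpha$ be as in the context. For every $P\in L$ and all $\tau,\tau'\in S^{\mathrm{pf}}$, if $\tau\in\alpha(P)$ and $\tau\preceq\tau'$, then $\tau'\in\alpha(P)$.
   Context: Let $E$ be a set of events. A trace is a finite sequence $\sigma=\sigma_0\cdots\sigma_{n-1}$ ($n\ge 0$) or an infinite sequence $\sigma_0\sigma_1\cdots$ of events; $|\sigma|$ is its length ($\infty$ if infinite) and $\mathbb{T}$ is the set of all traces (including the empty trace). Write $\sigma\preceq\sigma'$ iff $|\sigma|\le|\sigma'|$ and $\sigma_i=\sigma'_i$ for all $0\le i<|\sigma|$ (prefix order). For $P\subseteq\mathbb{T}$, $\mathrm{pf}(P)=\{\sigma'\in\mathbb{T}\mid\exists\sigma\in P.\ \sigma'\preceq\sigma\}$. Fix $S^{\max}\subseteq\mathbb{T}$ and let $S^{\mathrm{pf}}=\mathrm{pf}(S^{\max})$ (valid traces). For $P\subseteq\mathbb{T}$, $\alpha(P)=\{\sigma\in\mathrm{pf}(P)\mid\forall\sigma'\in S^{\max}.\ \sigma\preceq\sigma'\Rightarrow\sigma'\in P\}$. Let $L\subseteq\wp(S^{\max})$ with $S^{\max},\emptyset\in L$ be such that $(L,\subseteq)$ is a complete lattice. *)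

Set Implicit Arguments.

(* A trace over events E: a finite or infinite sequence, encoded as a map
   nat -> option E that is "None-closed": position i holds Some e iff
   i < |sigma|.  The length is infinite iff all positions are Some. *)
Record trace (E : Type) : Type := Trace {
  tr : nat -> option E;
  tr_wf : forall i, tr i = None -> tr (S i) = None
}.

Definition tset (E : Type) := trace E -> Prop.

Definition subset (E : Type) (P Q : tset E) : Prop := forall s, P s -> Q s.

Definition prefix (E : Type) (s s' : trace E) : Prop :=
  forall i, tr s i <> None -> tr s i = tr s' i.

Definition pf (E : Type) (P : tset E) : tset E :=
  fun s' => exists s, P s /\ prefix s' s.

Definition alpha (E : Type) (Smax P : tset E) : tset E :=
  fun s => pf P s /\ (forall s', Smax s' -> prefix s s' -> P s').

Definition empty_set (E : Type) : tset E := fun _ => False.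

Definition complete_lattice (E : Type) (L : tset E -> Prop) : Prop :=
  forall X : tset E -> Prop, (forall P, X P -> L P) ->
    (exists S, L S /\ (forall P, X P -> subset P S) /\
       (forall U, L U -> (forall P, X P -> subset P U) -> subset S U)) /\
    (exists I, L I /\ (forall P, X P -> subset I P) /\
       (forall U, L U -> (forall P, X P -> subset U P) -> subset U I)).


Lemma prefix_trans {E : Type} {a b c : trace E} :
  prefix a b -> prefix b c -> prefix a c.
Proof.
  intros Hab Hbc i Hi.
  rewrite (Hab i Hi).
  apply Hbc.
  now rewrite <- (Hab i Hi).
Qed.

Lemma alpha_maximal_extensions {E : Type} {Smax P : tset E} {tau tau' s : trace E} :
  alpha Smax P tau -> prefix tau tau' -> Smax s -> prefix tau' s -> P s.
Proof.
  intros [_ Hext] Htt' Hs Ht's.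
  apply Hext; [exact Hs|].
  exact (prefix_trans Htt' Ht's).
Qed.

(* The valid extension of [tau'] witnessing [pf Smax tau'] is a maximal
   extension of [tau], hence lies in [P]; this is where validity of [tau'] is
   needed. *)
Lemma alpha_prefix_closed {E : Type} {Smax P : tset E} {tau tau' : trace E} :
  pf Smax tau' -> alpha Smax P tau -> prefix tau tau' -> alpha Smax P tau'.
Proof.
  intros [s [Hs Ht's]] Halpha Htt'.
  split.
  - exists s. split; [|exact Ht's].
    exact (alpha_maximal_extensions Halpha Htt' Hs Ht's).
  - intros s' Hs' Ht's'.
    exact (alpha_maximal_extensions Halpha Htt' Hs' Ht's').
Qed.

Theorem lemma5 (E : Type) (Smax : tset E) (L : tset E -> Prop)
  (HLsub : forall P, L P -> subset P Smax)
  (HLmax : L Smax) (HLempty : L (@empty_set E))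
  (HLcl : complete_lattice L) :
  forall P, L P ->
  forall tau tau' : trace E,
    pf Smax tau -> pf Smax tau' ->
    alpha Smax P tau -> prefix tau tau' ->
    alpha Smax P tau'.
Proof.
  intros P _ tau tau' _ Hvalid' Halpha Htt'.
  exact (alpha_prefix_closed Hvalid' Halpha Htt').
Qed.
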